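(* Consider the autonomous system $\ddot q^{a}=-\Gamma^{a}_{bc}(q)\dot q^{b}\dot q^{c}-Q^{a}(q)$ on a (pseudo-)Riemannian manifold with metric $\gamma_{ab}$. Let $m\ge 3$, let $\lambda\neq 0$ be a constant, and for $r=1,\dots,m-1$ let $L_{i_1\dots i_r}(q)$ be totally symmetric $r$-rank tensor fields such that $L_{(i_1\dots i_{m-1};i_m)}$ is an $m$th-order Killing tensor and \begin{align*} &L_{(i_1\dots i_{m-2};i_{m-1})}=-\tfrac{m}{\lambda}L_{(i_1\dots i_{m-1};i_m)}Q^{i_m}-\lambda L_{i_1\dots i_{m-1}},\\ &L_{(i_1\dots i_{r-1};i_r)}=(r+1)L_{i_1\dots i_r i_{r+1}}Q^{i_{r+1}}-\lambda L_{i_1\dots i_r},\quad r=2,\dots,m-2,\\ &\big(L_{c}Q^{c}\big)_{,i_1}=2\lambda L_{i_1i_2}Q^{i_2}-\lambda^{2}L_{i_1}. \end{align*} Then $$I^{(m)}_e=\frac{e^{\lambda t}}{\lambda}\Big(-L_{(i_1\dots i_{m-1};i_m)}\dot q^{i_1}\cdots\dot q^{i_m}+\lambda\sum_{r=1}^{m-1}L_{i_1\dots i_r}\dot q^{i_1}\cdots\dot q^{i_r}+L_{i_1}Q^{i_1}\Big)$$ is a first integral of the system.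
   Context: Indices are raised and lowered with $\gamma_{ab}$; Einstein summation convention; $\Gamma^a_{bc}$ are the Christoffel symbols of $\gamma_{ab}$; a comma denotes a partial derivative, a semicolon the Levi-Civita covariant derivative, round brackets around indices denote normalized total symmetrization. A totally symmetric tensor $K_{i_1\dots i_p}$ is a $p$th-order Killing tensor if $K_{(i_1\dots i_p;i_{p+1})}=0$. For $m=3$ the conditions with $r=2,\dots,m-2$ are vacuous. A first integral is a function of $(t,q,\dot q)$ constant along all solutions. *)

From HB Require Import structures.
From mathcomp Require Import all_boot all_order all_algebra perm.
From mathcomp Require Import all_classical all_reals all_analysis.
Set Implicit Arguments. Unset Strict Implicit. Unset Printing Implicit Defensive.
Import Order.TTheory GRing.Theory Num.Theory.
Import numFieldNormedType.Exports.
Local Open Scope ring_scope.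

Section Defs.
Variables (R : realType) (n : nat).

Definition pt := 'rV[R]_n.

Definition ebasis (j : 'I_n) : pt := delta_mx 0 j.

Definition partial (f : pt -> R) (j : 'I_n) (q : pt) : R := 'D_(ebasis j) f q.

Fixpoint Ck (k : nat) (f : pt -> R) : Prop :=
  match k with
  | 0 => continuous f
  | k'.+1 => (forall (x : pt) (j : 'I_n), derivable f x (ebasis j)) /\
             (forall j : 'I_n, Ck k' (partial f j))
  end.
Definition smooth (f : pt -> R) : Prop := forall k, Ck k f.

(* a covariant tensor field: components indexed by sequences of indices
   (the rank-r tensor is read on sequences of size r) *)
Definition tensor := seq 'I_n -> pt -> R.

Definition symmetric_tensor (T : tensor) (r : nat) : Prop :=
  forall s s' : seq 'I_n, size s = r -> perm_eq s s' -> T s = T s'.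

Definition christoffel (g : pt -> 'M[R]_n) (a b c : 'I_n) (q : pt) : R :=
  2^-1 * \sum_(d < n) (invmx (g q)) a d *
    (partial (fun x => g x d c) b q + partial (fun x => g x d b) c q
     - partial (fun x => g x b c) d q).

Definition covD (g : pt -> 'M[R]_n) (T : tensor) (s : seq 'I_n) (j : 'I_n)
  (q : pt) : R :=
  partial (T s) j q -
  \sum_(k < size s) \sum_(c < n)
     christoffel g c j (tnth (in_tuple s) k) q * T (set_nth c s k c) q.

(* the tensor  T_{i_1 ... i_p ; i_{p+1}}  (derivative index last) *)
Definition nablaT (g : pt -> 'M[R]_n) (T : tensor) : tensor :=
  fun s => match s with
           | [::] => fun _ => 0
           | x :: s0 => covD g T (belast x s0) (last x s0)
           end.

Definition symz (T : tensor) : tensor :=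
  fun s q => ((size s)`!%:R)^-1 *
    \sum_(sigma : 'S_(size s))
       T [seq tnth (in_tuple s) (sigma k) | k : 'I_(size s)] q.

Definition killing_tensor (g : pt -> 'M[R]_n) (K : tensor) (p : nat) : Prop :=
  symmetric_tensor K p /\
  forall s : seq 'I_n, size s = p.+1 -> forall q, symz (nablaT g K) s q = 0.

Definition contrQ (T : tensor) (Q : 'I_n -> pt -> R) : tensor :=
  fun s q => \sum_(j < n) T (rcons s j) q * Q j q.

Definition is_solution (g : pt -> 'M[R]_n) (Q : 'I_n -> pt -> R)
  (a0 b0 : R) (q : R -> pt) : Prop :=
  forall t, a0 < t < b0 ->
    [/\ derivable q t 1, derivable (derive1 q) t 1 &
      forall a : 'I_n,
        (derive1 (derive1 q) t) 0 a =
          - (\sum_(b < n) \sum_(c < n)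
               christoffel g a b c (q t) * (derive1 q t) 0 b * (derive1 q t) 0 c)
          - Q a (q t)].

Definition evalv (T : tensor) (r : nat) (q v : pt) : R :=
  \sum_(t : r.-tuple 'I_n) T t q * \prod_(i <- t) v 0 i.

Definition I_e (g : pt -> 'M[R]_n) (Q : 'I_n -> pt -> R) (L : nat -> tensor)
  (m : nat) (lam : R) (t : R) (q v : pt) : R :=
  expR (lam * t) / lam *
   (- evalv (symz (nablaT g (L m.-1))) m q v
    + lam * \sum_(1 <= r < m) evalv (L r) r q v
    + \sum_(i < n) L 1%N [:: i] q * Q i q).

End Defs.

From HB Require Import structures.
From mathcomp Require Import all_boot all_order all_algebra perm.
From mathcomp Require Import all_classical all_reals all_analysis.
From mathcomp Require Import ring.
Import Order.TTheory GRing.Theory Num.Theory.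
Import numFieldNormedType.Exports.

(* Write  E_T(q, v) = T_{i_1..i_r}(q) v^{i_1}..v^{i_r}  for a symmetric rank-r
   tensor T ([evalv]).  Along a solution of  q'' = -Gamma(q)(q',q') - Q(q),
   the chain rule and the equation of motion give the basic identity
     d/dt E_T(q, q') = E_{T_{(i_1..i_r;i_{r+1})}}(q, q') - r E_{T_{..c} Q^c}(q, q'),
   the Christoffel terms of q'' cancelling those of the covariant derivative.
   For a Killing tensor the first term vanishes.  Writing I_e = e^{lam t} F/lam,
   the hypotheses on the L_r make the derivative of F telescope to -lam F, so
   (e^{lam t} F)' = 0 and I_e is constant by the mean value theorem. *)

Set Implicit Arguments. Unset Strict Implicit. Unset Printing Implicit Defensive.
Local Open Scope classical_set_scope.
Local Open Scope ring_scope.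

Section ChainRule.
Variables (R : realType) (n : nat).
Local Notation pt := 'rV[R]_n.

Lemma is_derive_line (f : pt -> R) (p e : pt) (u : R) :
  derivable f (p + u *: e) e ->
  is_derive u 1 (fun u => f (p + u *: e)) ('D_e f (p + u *: e)).
Proof.
move=> df.
have E : (fun h : R => h^-1 *: ((fun u => f (p + u *: e)) \o shift u) (h *: 1)
             - h^-1 *: f (p + u *: e)) =
         (fun h : R => h^-1 *: (f \o shift (p + u *: e)) (h *: e)
             - h^-1 *: f (p + u *: e)).
  apply/funext => h /=; congr (_ *: f _ - _).
  by rewrite [h *: 1]mulr1 scalerDl addrCA addrC.
have cv : (fun h : R => h^-1 *: ((fun u => f (p + u *: e)) \o shift u) (h *: 1)
             - h^-1 *: f (p + u *: e)) @ 0^' --> 'D_e f (p + u *: e).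
  rewrite E.
  have := df; rewrite /derivable => /cvg_ex [l Hl].
  rewrite /derive.
  under eq_fun do rewrite -scalerBr.
  by rewrite (cvg_lim _ Hl).
apply: DeriveDef.
  rewrite /derivable; under eq_fun do rewrite scalerBr.
  exact: cvgP cv.
rewrite /derive; under eq_fun do rewrite scalerBr.
exact: cvg_lim cv.
Qed.

Lemma coordinate_increment_bound (f : pt -> R) (k : 'I_n) (p : pt) (s c e : R) :
  (forall x, derivable f x (ebasis R k)) ->
  (forall u, `|u| <= `|s| -> `|partial f k (p + u *: ebasis R k) - c| <= e) ->
  `|f (p + s *: ebasis R k) - f p - c * s| <= e * `|s|.
Proof.
move=> df hb.
set phi := fun u => f (p + u *: ebasis R k).
have dphi (u : R) : is_derive u (1:R) phi (partial f k (p + u *: ebasis R k)).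
  exact: is_derive_line.
have cphi (a b : R) : {within `[a, b], continuous phi}.
  apply: derivable_within_continuous => x _.
  by have [] := dphi x.
have -> : f p = phi 0 by rewrite /phi scale0r addr0.
have [xi xis E] : exists2 xi, `|xi| <= `|s| &
    phi s - phi 0 = partial f k (p + xi *: ebasis R k) * s.
  have [s0|s0] := leP 0 s.
    have [xi xin E] := MVT_segment s0 (fun x _ => dphi x) (cphi 0 s).
    exists xi; last by rewrite E subr0.
    move: xin; rewrite in_itv /= => /andP[h1 h2].
    by rewrite !ger0_norm // (le_trans h1).
  have [xi xin E] := MVT_segment (ltW s0) (fun x _ => dphi x) (cphi s 0).
  exists xi.
    move: xin; rewrite in_itv /= => /andP[h1 h2].
    rewrite !ler0_norm ?(ltW s0) //; first by rewrite lerN2.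
  by rewrite -opprB E sub0r mulrN opprK.
rewrite E -mulrBl normrM ler_wpM2r //.
exact: hb.
Qed.

(* The point whose first k coordinates are those of z and the others those
   of x; moving from x to z one coordinate at a time telescopes f z - f x. *)
Definition mixpt (x z : pt) (k : nat) : pt :=
  \row_i (if (i < k)%N then z 0 i else x 0 i).

Lemma mixpt0 x z : mixpt x z 0 = x.
Proof. by apply/rowP => i; rewrite !mxE ltn0. Qed.

Lemma mixptn x z : mixpt x z n = z.
Proof. by apply/rowP => i; rewrite !mxE ltn_ord. Qed.

Lemma mixptS x z (k : 'I_n) :
  mixpt x z k.+1 = mixpt x z k + (z 0 k - x 0 k) *: ebasis R k.
Proof.
apply/rowP => i; rewrite !mxE eqxx /= ltnS leq_eqVlt.
case: (ltngtP i k) => [ik|ki|/val_inj ->] /=.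
- by rewrite -val_eqE /= (ltn_eqF ik) mulr0 addr0.
- by rewrite -val_eqE /= (gtn_eqF ki) mulr0 addr0.
- by rewrite eqxx mulr1 addrC subrK.
Qed.

Lemma cvg_sum_ord (T : Type) (F : set_system T) (FF : Filter F) (N : nat)
  (A : 'I_N -> T -> R) (a : 'I_N -> R) :
  (forall k, A k @ F --> a k) ->
  (fun h => \sum_(k < N) A k h) @ F --> \sum_(k < N) a k.
Proof.
elim: N A a => [|N IH] A a H.
  under eq_fun do rewrite big_ord0. rewrite big_ord0. exact: cvg_cst.
under eq_fun do rewrite big_ord_recr /=. rewrite big_ord_recr /=.
apply: cvgD; last exact: H.
exact: (IH (fun k => A (widen_ord (leqnSn N) k))).
Qed.

(* If z lies in the ball of radius del around x, so does the segment from
   mixpt x z k to mixpt x z k.+1, since it only moves the k-th coordinate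
   between x 0 k and z 0 k. *)
Lemma mixpt_segment_ball (x z : pt) (k : 'I_n) (del u : R) :
  ball x del z -> `|u| <= `|z 0 k - x 0 k| ->
  ball x del (mixpt x z k + u *: ebasis R k).
Proof.
move=> [del0 bz] hu; rewrite /ball /= /mx_ball; split => // i j.
rewrite (ord1 i) !mxE eqxx /=.
move: (bz 0 j); rewrite -!ball_normE /ball_ /= => bzj.
case: ifP => ij; first by rewrite -val_eqE /= (ltn_eqF ij) mulr0 addr0.
case: (eqVneq j k) bzj => [->|jk] bzj; last by rewrite mulr0 addr0 subrr normr0.
rewrite mulr1 opprD addrA subrr sub0r normrN (le_lt_trans hu) //.
by rewrite distrC.
Qed.

Lemma mixpt_step_quotient (f : pt -> R) (x : pt) (z : R -> pt) (k : 'I_n) (dk : R) :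
  (forall y j, derivable f y (ebasis R j)) ->
  continuous (partial f k) ->
  (fun h : R => h^-1 * (z h 0 k - x 0 k)) @ 0^' --> dk ->
  z @ 0^' --> x ->
  (fun h => h^-1 * (f (mixpt x (z h) k.+1) - f (mixpt x (z h) k))) @ 0^'
    --> partial f k x * dk.
Proof.
move=> df cf dqk cz.
set c := partial f k x.
have -> : (fun h => h^-1 * (f (mixpt x (z h) k.+1) - f (mixpt x (z h) k))) =
   (fun h => c * (h^-1 * (z h 0 k - x 0 k)) +
      h^-1 * (f (mixpt x (z h) k.+1) - f (mixpt x (z h) k) - c * (z h 0 k - x 0 k))).
  by apply/funext => h; ring.
rewrite -[X in _ --> X]addr0.
apply: cvgD; first exact: (cvgM (cvg_cst c) dqk).
apply/cvgrPdist_le => eps eps0.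
set M := `|dk| + 1.
have M0 : 0 < M by rewrite /M ltr_pwDr.
set e := eps / M.
have e0 : 0 < e by rewrite divr_gt0.
have near_c : \forall y \near x, `|c - partial f k y| < e.
  by move: (cf x) => /cvgrPdist_lt; apply.
have [del del0 Hball] := (nbhs_ballP _ _).1 near_c.
have near_x : \forall h \near 0^', ball x del (z h).
  by apply: (cz (ball x del)); exact: nbhsx_ballx.
have near_dk := (cvgrPdist_le _ _).1 dqk 1 ltr01.
near=> h.
have b1 : ball x del (z h) by near: h; exact: near_x.
have b2 : `|dk - h^-1 * (z h 0 k - x 0 k)| <= 1 by near: h; exact: near_dk.
set del_ := z h 0 k - x 0 k.
have step : `|f (mixpt x (z h) k.+1) - f (mixpt x (z h) k) - c * del_| <= e * `|del_|.
  rewrite mixptS; apply: coordinate_increment_bound => // u hu.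
  by rewrite distrC; apply/ltW/Hball/mixpt_segment_ball.
rewrite sub0r normrN normrM normfV.
have hb : `|h^-1 * del_| <= M.
  rewrite /M addrC -(subKr dk (h^-1 * del_)) (le_trans (ler_normB _ _)) //.
  by rewrite [leLHS]addrC lerD2r; exact: b2.
have hi : 0 <= `|h|^-1 by rewrite invr_ge0.
apply: le_trans (ler_wpM2l hi step) _.
rewrite mulrCA -normfV -normrM.
apply: le_trans (ler_wpM2l (ltW e0) hb) _.
by rewrite /e divfK // gt_eqF.
Unshelve. all: by end_near.
Qed.

Lemma chain_rule (f : pt -> R) (q : R -> pt) (t : R) :
  (forall x k, derivable f x (ebasis R k)) ->
  (forall k, continuous (partial f k)) ->
  derivable q t 1 ->
  is_derive t (1:R) (f \o q) (\sum_(k < n) partial f k (q t) * ('D_1 q t) 0 k).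
Proof.
move=> df cf dq.
set x := q t. set d := 'D_1 q t.
set z := fun h : R => q (h + t).
have dqk k : (fun h : R => h^-1 * (z h 0 k - x 0 k)) @ 0^' --> d 0 k.
  have := (derivable_mxP q t 1).1 dq 0 k.
  rewrite /derivable => /cvg_ex[l Hl].
  have E : (fun h : R => h^-1 * (z h 0 k - x 0 k)) =
     (fun h : R => h^-1 *: (((fun s => q s 0 k) \o shift t) (h *: 1) - q t 0 k)).
    by apply/funext => h; rewrite /z /= [h *: 1]mulr1.
  have -> : d 0 k = l.
    rewrite /d derive_mx // mxE /derive.
    exact: cvg_lim Hl.
  by rewrite E.
have cz : z @ 0^' --> x.
  have := differentiable_continuous ((derivable1_diffP q t).1 dq).
  by move/continuous_withinNshiftx.
have telescope h : f (z h) - f x =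
    \sum_(k < n) (f (mixpt x (z h) k.+1) - f (mixpt x (z h) k)).
  rewrite -(big_mkord xpredT (fun k => f (mixpt x (z h) k.+1) - f (mixpt x (z h) k))).
  by rewrite telescope_sumr // mixptn mixpt0.
suff conv : (fun h : R => h^-1 *: ((f \o q) \o shift t) (h *: 1) - h^-1 *: (f \o q) t)
    @ 0^' --> \sum_(k < n) partial f k (q t) * ('D_1 q t) 0 k.
  apply: DeriveDef.
    rewrite /derivable; under eq_fun do rewrite scalerBr.
    exact: cvgP conv.
  rewrite /derive; under eq_fun do rewrite scalerBr.
  exact: cvg_lim conv.
have -> : (fun h : R => h^-1 *: ((f \o q) \o shift t) (h *: 1) - h^-1 *: (f \o q) t) =
   (fun h => \sum_(k < n) h^-1 * (f (mixpt x (z h) k.+1) - f (mixpt x (z h) k))).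
  apply/funext => h; rewrite -mulr_sumr -telescope /z /= [h *: 1]mulr1.
  by rewrite -scalerBr.
apply: cvg_sum_ord => k.
exact: mixpt_step_quotient.
Qed.

End ChainRule.

Section Smoothness.
Variables (R : realType) (n : nat).
Local Notation pt := 'rV[R]_n.
Implicit Types (f g : pt -> R).

Lemma Ck_add k f g : Ck k f -> Ck k g -> Ck k (fun x => f x + g x).
Proof.
elim: k f g => [|k IH] f g /= Hf Hg.
  by move=> x; exact: (cvgD (Hf x) (Hg x)).
case: Hf => [df pf]; case: Hg => [dg pg]; split.
  by move=> x j; apply: derivableD.
move=> j.
have -> : partial (fun x => f x + g x) j = fun x => partial f j x + partial g j x.
  by apply/funext => x; rewrite /partial deriveD.
exact: IH.
Qed.

Lemma Ck_cst k (c : R) : Ck k (fun _ : pt => c).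
Proof.
elim: k c => [|k IH] c /=; first exact: cst_continuous.
split; first by move=> x j; exact: derivable_cst.
move=> j.
have -> : partial (fun _ : pt => c) j = fun _ => 0.
  by apply/funext => x; rewrite /partial derive_cst.
exact: IH.
Qed.

Lemma Ck_opp k f : Ck k f -> Ck k (fun x => - f x).
Proof.
elim: k f => [|k IH] f /= Hf.
  by move=> x; exact: (cvgN (Hf x)).
case: Hf => [df pf]; split.
  by move=> x j; apply: derivableN.
move=> j.
have -> : partial (fun x => - f x) j = fun x => - partial f j x.
  by apply/funext => x; rewrite /partial deriveN.
exact: IH.
Qed.

(* C^k is closed under products: by the Leibniz rule the partial
   derivative of a product only involves derivatives of lower order. *)
Lemma Ck_mul k f g : (forall j, (j <= k)%N -> Ck j f) -> (forall j, (j <= k)%N -> Ck j g) ->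
  Ck k (fun x => f x * g x).
Proof.
elim: k f g => [|k IH] f g Hf Hg.
  by move=> x /=; exact: (cvgM (Hf 0%N isT x) (Hg 0%N isT x)).
have [df _] := Hf 1%N isT; have [dg _] := Hg 1%N isT.
split; first by move=> x j; apply: derivableM.
move=> i.
have -> : partial (fun x => f x * g x) i =
   fun x => f x * partial g i x + g x * partial f i x.
  by apply/funext => x; rewrite /partial deriveM.
apply: Ck_add; apply: IH => j jk.
- by apply: Hf; rewrite (leq_trans jk).
- by have [_ ] := Hg j.+1 jk; apply.
- by apply: Hg; rewrite (leq_trans jk).
- by have [_ ] := Hf j.+1 jk; apply.
Qed.

Lemma Ck_inv k f : (forall x, f x != 0) -> (forall j, (j <= k)%N -> Ck j f) ->
  forall j, (j <= k)%N -> Ck j (fun x => (f x)^-1).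
Proof.
move=> f0; elim: k => [|k IH] Hf j.
  rewrite leqn0 => /eqP -> /= x.
  exact: (cvgV (f0 x) (Hf 0%N isT x)).
rewrite leq_eqVlt => /orP[/eqP ->|]; last first.
  by rewrite ltnS; apply: IH => j' j'k; apply: Hf; rewrite (leq_trans j'k).
have [df _] := Hf 1%N isT.
split; first by move=> x i; apply: derivableV.
move=> i.
have -> : partial (fun x => (f x)^-1) i =
   fun x => - partial f i x * ((f x)^-1 * (f x)^-1).
  apply/funext => x; rewrite /partial deriveV //.
  rewrite -exprVn expr2 scaleNr mulNr; congr (- _); exact: mulrC.
apply: Ck_mul => j' j'k.
  by apply: Ck_opp; have [_] := Hf j'.+1 j'k; apply.
apply: Ck_mul => j'' j''k; apply: IH; try exact: (leq_trans j''k j'k).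
all: by move=> j0 j0k; apply: Hf; rewrite (leq_trans j0k).
Qed.

Lemma smooth_add f g : smooth f -> smooth g -> smooth (fun x => f x + g x).
Proof. by move=> Hf Hg k; apply: Ck_add. Qed.
Lemma smooth_cst (c : R) : smooth (fun _ : pt => c).
Proof. by move=> k; apply: Ck_cst. Qed.
Lemma smooth_opp f : smooth f -> smooth (fun x => - f x).
Proof. by move=> Hf k; apply: Ck_opp. Qed.
Lemma smooth_sub f g : smooth f -> smooth g -> smooth (fun x => f x - g x).
Proof. by move=> Hf Hg; apply: smooth_add => //; apply: smooth_opp. Qed.
Lemma smooth_mul f g : smooth f -> smooth g -> smooth (fun x => f x * g x).
Proof. by move=> Hf Hg k; apply: Ck_mul. Qed.
Lemma smooth_inv f : (forall x, f x != 0) -> smooth f -> smooth (fun x => (f x)^-1).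
Proof. by move=> f0 Hf k; apply: (@Ck_inv k) => //. Qed.
Lemma smooth_partial f j : smooth f -> smooth (partial f j).
Proof. by move=> Hf k; have [_] := Hf k.+1; apply. Qed.
Lemma smooth_ext f g : (forall x, f x = g x) -> smooth f -> smooth g.
Proof. by move=> E; have -> : f = g by apply/funext. Qed.

Lemma smooth_sum (I : Type) (r : seq I) (P : pred I) (F : I -> pt -> R) :
  (forall i, P i -> smooth (F i)) -> smooth (fun x => \sum_(i <- r | P i) F i x).
Proof.
move=> HF; elim: r => [|a r IH].
  by apply: (smooth_ext _ (smooth_cst 0)) => x; rewrite big_nil.
case Pa: (P a).
  apply: (smooth_ext _ (smooth_add (HF a Pa) IH)) => x.
  by rewrite big_cons Pa.
by apply: (smooth_ext _ IH) => x; rewrite big_cons Pa.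
Qed.

Lemma smooth_prod (I : Type) (r : seq I) (P : pred I) (F : I -> pt -> R) :
  (forall i, P i -> smooth (F i)) -> smooth (fun x => \prod_(i <- r | P i) F i x).
Proof.
move=> HF; elim: r => [|a r IH].
  by apply: (smooth_ext _ (smooth_cst 1)) => x; rewrite big_nil.
case Pa: (P a).
  apply: (smooth_ext _ (smooth_mul (HF a Pa) IH)) => x.
  by rewrite big_cons Pa.
by apply: (smooth_ext _ IH) => x; rewrite big_cons Pa.
Qed.

(* Entries of a smooth matrix field give a smooth determinant (Leibniz
   formula) and, when invertible, a smooth inverse (cofactor formula). *)
Lemma smooth_det p (A : pt -> 'M[R]_p) :
  (forall i j, smooth (fun x => A x i j)) -> smooth (fun x => \det (A x)).
Proof.
move=> HA; apply: (smooth_ext (f := fun x => \sum_(s : 'S_p) ((-1) ^+ s * \prod_i A x i (s i)))).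
  by move=> x; rewrite /determinant unlock.
apply: smooth_sum => s _; apply: smooth_mul; first exact: smooth_cst.
by apply: smooth_prod => i _.
Qed.

Lemma smooth_invmx p (A : pt -> 'M[R]_p) :
  (forall i j, smooth (fun x => A x i j)) -> (forall x, A x \in unitmx) ->
  forall i j, smooth (fun x => invmx (A x) i j).
Proof.
move=> HA Au i j.
have d0 x : \det (A x) != 0 by rewrite -unitfE -unitmxE.
apply: (smooth_ext (f := fun x => (\det (A x))^-1 *
   ((-1) ^+ (j + i) * \det (row' j (col' i (A x)))))).
  by move=> x; rewrite /invmx Au !mxE /cofactor.
apply: smooth_mul; first by apply: smooth_inv => //; exact: smooth_det.
apply: smooth_mul; first exact: smooth_cst.
apply: smooth_det => a b.
by apply: (smooth_ext _ (HA (lift j a) (lift i b))) => x; rewrite !mxE.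
Qed.

Lemma smooth_christoffel (g : pt -> 'M[R]_n) :
  (forall a b, smooth (fun x => g x a b)) -> (forall x, g x \in unitmx) ->
  forall a b c, smooth (christoffel g a b c).
Proof.
move=> Hg Gu a b c; rewrite /christoffel.
apply: smooth_mul; first exact: smooth_cst.
apply: smooth_sum => d _; apply: smooth_mul; first exact: smooth_invmx.
apply: smooth_sub; last exact: smooth_partial.
by apply: smooth_add; apply: smooth_partial.
Qed.

Lemma smooth_covD (g : pt -> 'M[R]_n) (T : tensor R n) s j :
  (forall a b c, smooth (christoffel g a b c)) ->
  (forall s', size s' = size s -> smooth (T s')) ->
  smooth (covD g T s j).
Proof.
move=> HG HT; rewrite /covD.
apply: smooth_sub; first exact/smooth_partial/HT.
apply: smooth_sum => k _; apply: smooth_sum => c _.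
apply: smooth_mul; first exact: HG.
by apply: HT; rewrite size_set_nth; apply/maxn_idPr.
Qed.

Lemma smooth_nablaT (g : pt -> 'M[R]_n) (T : tensor R n) p s :
  (forall a b c, smooth (christoffel g a b c)) ->
  (forall s', size s' = p -> smooth (T s')) ->
  size s = p.+1 -> smooth (nablaT g T s).
Proof.
move=> HG HT; case: s => [//|x s0] /= [Hs].
apply: smooth_covD => // s'; rewrite size_belast Hs; exact: HT.
Qed.

Lemma smooth_symz (T : tensor R n) s :
  (forall s', size s' = size s -> smooth (T s')) -> smooth (symz T s).
Proof.
move=> HT; rewrite /symz.
apply: smooth_mul; first exact: smooth_cst.
apply: smooth_sum => sigma _; apply: HT.
by rewrite size_map size_enum_ord.
Qed.

Lemma smooth_C1 f : smooth f ->
  (forall y j, derivable f y (ebasis R j)) /\ (forall j, continuous (partial f j)).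
Proof. by move=> Hf; have [] := Hf 1%N. Qed.

End Smoothness.

Section RealDerivatives.
Variable R : realType.

Lemma is_deriveM1 (f g : R -> R) t df dg :
  is_derive t (1:R) f df -> is_derive t (1:R) g dg ->
  is_derive t (1:R) (fun t => f t * g t) (f t * dg + g t * df).
Proof. by move=> Hf Hg; have := is_deriveM Hf Hg. Qed.

Lemma is_deriveD1 (f g : R -> R) t df dg :
  is_derive t (1:R) f df -> is_derive t (1:R) g dg ->
  is_derive t (1:R) (fun t => f t + g t) (df + dg).
Proof. by move=> Hf Hg; have := is_deriveD Hf Hg. Qed.

Lemma is_deriveN1 (f : R -> R) t df :
  is_derive t (1:R) f df -> is_derive t (1:R) (fun t => - f t) (- df).
Proof. by move=> Hf; have := is_deriveN Hf. Qed.

Lemma is_derive_bigsum (I : eqType) (r : seq I) (F : I -> R -> R) (dF : I -> R) t :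
  (forall i, i \in r -> is_derive t (1:R) (F i) (dF i)) ->
  is_derive t (1:R) (fun t => \sum_(i <- r) F i t) (\sum_(i <- r) dF i).
Proof.
elim: r => [|a r IH] HF.
  have -> : (fun t => \sum_(i <- [::]) F i t) = fun _ => 0.
    by apply/funext => s; rewrite big_nil.
  by rewrite big_nil; exact: is_derive_cst.
have -> : (fun t => \sum_(i <- a :: r) F i t) = fun t => F a t + \sum_(i <- r) F i t.
  by apply/funext => s; rewrite big_cons.
rewrite big_cons; apply: is_deriveD1; first by apply: HF; rewrite mem_head.
by apply: IH => i ir; apply: HF; rewrite in_cons ir orbT.
Qed.

Lemma is_derive_prod (N : nat) (F : 'I_N -> R -> R) (dF : 'I_N -> R) t :
  (forall i, is_derive t (1:R) (F i) (dF i)) ->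
  is_derive t (1:R) (fun t => \prod_(i < N) F i t)
    (\sum_(k < N) \prod_(i < N) (if i == k then dF i else F i t)).
Proof.
elim: N F dF => [|N IH] F dF HF.
  have -> : (fun t => \prod_(i < 0) F i t) = fun _ => 1.
    by apply/funext => s; rewrite big_ord0.
  by rewrite big_ord0; exact: is_derive_cst.
have -> : (fun t => \prod_(i < N.+1) F i t) =
   fun t => (\prod_(i < N) F (widen_ord (leqnSn N) i) t) * F ord_max t.
  by apply/funext => s; rewrite big_ord_recr.
have H := is_deriveM1 (IH (fun i => F (widen_ord (leqnSn N) i))
   (fun i => dF (widen_ord (leqnSn N) i)) (fun i => HF _)) (HF ord_max).
apply: (is_derive_eq H).
rewrite big_ord_recr /= big_ord_recr /= eqxx addrC.
congr (_ + _); last first.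
  rewrite mulr_sumr; apply: eq_bigr => k _; rewrite big_ord_recr /=.
  have -> : (ord_max == widen_ord (leqnSn N) k) = false.
    by rewrite -val_eqE /= gtn_eqF.
  rewrite mulrC; congr (_ * _); apply: eq_bigr => i _.
congr (_ * _); apply: eq_bigr => i _.
by rewrite -val_eqE /= ltn_eqF.
Qed.

Lemma is_derive_integrating_factor (F : R -> R) (lam t : R) :
  is_derive t (1:R) F (- lam * F t) ->
  is_derive t (1:R) (fun t => expR (lam * t) * F t) 0.
Proof.
move=> dF.
have dl : is_derive t (1:R) (fun t => lam * t) (lam * 1 + t * 0).
  exact: (is_deriveM1 (is_derive_cst lam t 1) (is_derive_id t 1)).
have de : is_derive t (1:R) (fun t => expR (lam * t)) (expR (lam * t) * (lam * 1 + t * 0)).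
  exact: (is_derive1_comp (is_derive_expR (lam * t)) dl).
apply: (is_derive_eq (is_deriveM1 de dF)); ring.
Qed.

Lemma derive0_constant (h : R -> R) (a0 b0 : R) :
  (forall t, a0 < t < b0 -> is_derive t (1:R) h 0) ->
  forall t1 t2, a0 < t1 < b0 -> a0 < t2 < b0 -> h t1 = h t2.
Proof.
move=> dh.
suff le_const u1 u2 : a0 < u1 < b0 -> a0 < u2 < b0 -> u1 <= u2 -> h u1 = h u2.
  move=> t1 t2 Ht1 Ht2; have [t12|t21] := leP t1 t2; first exact: le_const.
  by rewrite (le_const t2 t1) // ltW.
move=> Hu1 Hu2 u12.
have inI x : x \in `[u1, u2] -> a0 < x < b0.
  rewrite in_itv /= => /andP[x1 x2].
  case/andP: Hu1 => a1 _; case/andP: Hu2 => _ b2.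
  by rewrite (lt_le_trans a1 x1) (le_lt_trans x2 b2).
have dhd : {in `[u1, u2], forall x, derivable h x 1}.
  by move=> x xI; have [] := dh x (inI x xI).
have [c _ E] := MVT_segment u12 (fun x xI => dh x (inI x (subset_itv_oo_cc xI)))
  (derivable_within_continuous dhd).
by apply/eqP; rewrite eq_sym -subr_eq0 E mul0r.
Qed.

End RealDerivatives.

Section Forms.
Variables (R : realType) (n : nat).
Local Notation pt := 'rV[R]_n.
Local Notation tensor := (tensor R n).

Lemma evalvE (T : tensor) r q (v : pt) :
  evalv T r q v = \sum_(s : r.-tuple 'I_n) T s q * \prod_(k < r) v 0 (tnth s k).
Proof. by apply: eq_bigr => s _; rewrite big_tuple. Qed.

Definition tup_split r (s : r.+1.-tuple 'I_n) : r.-tuple 'I_n * 'I_n :=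
  ([tuple tnth s (widen_ord (leqnSn r) k) | k < r], tnth s ord_max).

Definition tup_join r (p : r.-tuple 'I_n * 'I_n) : r.+1.-tuple 'I_n :=
  [tuple of rcons p.1 p.2].

Lemma tnth_join_widen r (s : r.-tuple 'I_n) j (k : 'I_r) :
  tnth (tup_join (s, j)) (widen_ord (leqnSn r) k) = tnth s k.
Proof.
by rewrite /tup_join (tnth_nth j) /= nth_rcons size_tuple ltn_ord -tnth_nth.
Qed.

Lemma tnth_join_max r (s : r.-tuple 'I_n) j :
  tnth (tup_join (s, j)) ord_max = j.
Proof.
by rewrite /tup_join (tnth_nth j) /= nth_rcons size_tuple ltnn eqxx.
Qed.

Lemma tup_joinK r : cancel (@tup_join r) (@tup_split r).
Proof.
case=> s j; rewrite /tup_split tnth_join_max; congr (_, _).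
by apply: eq_from_tnth => k; rewrite tnth_mktuple tnth_join_widen.
Qed.

Lemma tup_splitK r : cancel (@tup_split r) (@tup_join r).
Proof.
move=> s; apply: eq_from_tnth => i.
have [ir|] := ltnP i r.
  have -> : i = widen_ord (leqnSn r) (Ordinal ir) by apply: val_inj.
  by rewrite tnth_join_widen tnth_mktuple.
move=> ri; have -> : i = ord_max.
  by apply: val_inj; apply/eqP; rewrite /= eqn_leq ri -ltnS ltn_ord.
by rewrite tnth_join_max.
Qed.

Lemma sum_tuple_rcons r (F : r.+1.-tuple 'I_n -> R) :
  \sum_(s : r.+1.-tuple 'I_n) F s =
  \sum_(s : r.-tuple 'I_n) \sum_(j : 'I_n) F (tup_join (s, j)).
Proof.
rewrite pair_big /= (reindex (@tup_join r)) /=; last first.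
  by apply: onW_bij; exists (@tup_split r); [exact: tup_joinK|exact: tup_splitK].
by apply: eq_bigr => -[s j].
Qed.

Lemma prod_join r (s : r.-tuple 'I_n) j (v : pt) :
  \prod_(k < r.+1) v 0 (tnth (tup_join (s, j)) k) =
  (\prod_(k < r) v 0 (tnth s k)) * v 0 j.
Proof.
rewrite big_ord_recr /= tnth_join_max; congr (_ * _).
by apply: eq_bigr => k _; rewrite tnth_join_widen.
Qed.

Lemma nablaT_rcons (g : pt -> 'M[R]_n) (T : tensor) s j :
  nablaT g T (rcons s j) = covD g T s j.
Proof.
case: s => [|x s0] //=.
by rewrite belast_rcons last_rcons.
Qed.

Definition tupd r (s : r.-tuple 'I_n) (l : 'I_r) (c : 'I_n) : r.-tuple 'I_n :=
  [tuple if k == l then c else tnth s k | k < r].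

Lemma set_nth_tupd r (s : r.-tuple 'I_n) (l : 'I_r) c :
  set_nth c s l c = tupd s l c.
Proof.
apply: (@eq_from_nth _ c).
  by rewrite size_set_nth !size_tuple; apply/maxn_idPr.
move=> i; rewrite size_set_nth size_tuple (elimT maxn_idPr (ltn_ord l)) => ir.
rewrite nth_set_nth /=.
rewrite -[nth c (tupd s l c) i](tnth_nth c (tupd s l c) (Ordinal ir)) tnth_mktuple.
rewrite -val_eqE /=; case: (i == l) => //.
by rewrite (tnth_nth c).
Qed.

Lemma covD_tuple (g : pt -> 'M[R]_n) (T : tensor) r (s : r.-tuple 'I_n) j q :
  covD g T s j q = partial (T s) j q -
    \sum_(l < r) \sum_(c < n) christoffel g c j (tnth s l) q * T (tupd s l c) q.
Proof.
rewrite /covD; congr (_ - _).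
pose G := fun k : nat => \sum_(c < n) christoffel g c j (nth j s k) q * T (set_nth c s k c) q.
transitivity (\sum_(k < size s) G k).
  by apply: eq_bigr => k _; rewrite /G (tnth_nth j).
rewrite -(big_mkord xpredT G) size_tuple big_mkord.
apply: eq_bigr => l _; apply: eq_bigr => c _.
by rewrite -(tnth_nth j s l) set_nth_tupd.
Qed.

Lemma tupd_l r (s : r.-tuple 'I_n) l c : tnth (tupd s l c) l = c.
Proof. by rewrite tnth_mktuple eqxx. Qed.

Lemma tupdK r (s : r.-tuple 'I_n) l c : tupd (tupd s l c) l (tnth s l) = s.
Proof.
apply: eq_from_tnth => k; rewrite !tnth_mktuple.
by case: eqVneq => [->|]//.
Qed.

Lemma prod_tupd r (s : r.-tuple 'I_n) l c (v : pt) :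
  \prod_(k < r) v 0 (tnth (tupd s l c) k) = v 0 c * \prod_(k < r | k != l) v 0 (tnth s k).
Proof.
rewrite (bigD1 l) //= tupd_l; congr (_ * _).
by apply: eq_bigr => k kl; rewrite tnth_mktuple (negbTE kl).
Qed.

(* The Gamma swap: contracting the Christoffel correction of the covariant
   derivative of T with v...v equals contracting T with the quadratic term
   Gamma^{s_l}_{bc} v^b v^c in the l-th slot (exchange of the summation
   variables s_l and c). *)
Lemma gamma_swap (g : pt -> 'M[R]_n) (T : tensor) r (l : 'I_r) (v : pt) q :
  \sum_(s : r.-tuple 'I_n) \sum_(j < n)
     (\sum_(c < n) christoffel g c j (tnth s l) q * T (tupd s l c) q) *
     (\prod_(k < r) v 0 (tnth s k) * v 0 j)
  = \sum_(s : r.-tuple 'I_n) T s q *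
     ((\sum_(b < n) \sum_(c < n) christoffel g (tnth s l) b c q * v 0 b * v 0 c) *
      \prod_(k < r | k != l) v 0 (tnth s k)).
Proof.
transitivity (\sum_(j < n) \sum_(s : r.-tuple 'I_n) \sum_(c < n)
   christoffel g c j (tnth s l) q * T (tupd s l c) q * (\prod_(k < r) v 0 (tnth s k) * v 0 j)).
  rewrite exchange_big; apply: eq_bigr => j _; apply: eq_bigr => s _.
  by rewrite mulr_suml.
transitivity (\sum_(j < n) \sum_(s : r.-tuple 'I_n) \sum_(c < n)
   T s q * (christoffel g (tnth s l) j c q * v 0 j * v 0 c * \prod_(k < r | k != l) v 0 (tnth s k))); last first.
  rewrite exchange_big; apply: eq_bigr => s _.
  rewrite mulr_suml mulr_sumr; apply: eq_bigr => j _.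
  rewrite mulr_suml mulr_sumr; apply: eq_bigr => c _.
  ring.
apply: eq_bigr => j _.
rewrite !pair_big.
pose phi := fun p : r.-tuple 'I_n * 'I_n => (tupd p.1 l p.2, tnth p.1 l).
have phiK : involutive phi.
  by case=> s c; rewrite /phi /= tupdK tupd_l.
rewrite (reindex_inj (inv_inj phiK)).
apply: eq_bigr => -[s c] _.
rewrite /phi; cbn [fst snd].
rewrite tupdK tupd_l prod_tupd.
ring.
Qed.

Definition permtup N (s : N.-tuple 'I_n) (sigma : 'S_N) : N.-tuple 'I_n :=
  [tuple tnth s (sigma k) | k < N].

Lemma permtup_perm N (s : N.-tuple 'I_n) sigma : perm_eq (permtup s sigma) s.
Proof.
rewrite /permtup /= -[X in perm_eq _ X](map_tnth_enum s).
rewrite (map_comp (tnth s) sigma).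
apply: perm_map; apply: uniq_perm.
- by rewrite (map_inj_uniq (@perm_inj _ sigma)) enum_uniq.
- exact: enum_uniq.
move=> x; rewrite mem_enum; apply/mapP; exists (sigma^-1 x)%g.
  by rewrite mem_enum.
by rewrite permKV.
Qed.

Lemma permtupK N (s : N.-tuple 'I_n) (sigma : 'S_N) :
  permtup (permtup s (sigma^-1)%g) sigma = s.
Proof.
by apply: eq_from_tnth => k; rewrite !tnth_mktuple permK.
Qed.

Lemma permtupKV N (s : N.-tuple 'I_n) (sigma : 'S_N) :
  permtup (permtup s sigma) (sigma^-1)%g = s.
Proof.
by apply: eq_from_tnth => k; rewrite !tnth_mktuple permKV.
Qed.

Lemma prod_permtup N (s : N.-tuple 'I_n) sigma (v : pt) :
  \prod_(k < N) v 0 (tnth (permtup s sigma) k) = \prod_(k < N) v 0 (tnth s k).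
Proof.
under eq_bigr do rewrite tnth_mktuple.
by rewrite [RHS](reindex_inj (@perm_inj _ sigma)).
Qed.

Lemma symz_tuple (T : tensor) p (s : p.+1.-tuple 'I_n) q :
  symz T s q = (p.+1)`!%:R^-1 * \sum_(sigma : 'S_p.+1) T (permtup s sigma) q.
Proof.
set x0 := tnth s ord0.
pose F := fun N : nat => (N`!%:R)^-1 *
   \sum_(sigma : 'S_N) T [seq nth x0 s (sigma k) | k : 'I_N] q.
transitivity (F (size s)).
  rewrite /symz /F; congr (_ * _); apply: eq_bigr => sigma _; congr (T _ q).
  by apply: eq_map => k; rewrite (tnth_nth x0).
rewrite /F size_tuple; congr (_ * _); apply: eq_bigr => sigma _; congr (T _ q).
rewrite /permtup /=; apply: eq_map => k.
by rewrite (tnth_nth x0).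
Qed.

Lemma evalv_symz (T : tensor) p q (v : pt) :
  evalv (symz T) p.+1 q v = evalv T p.+1 q v.
Proof.
rewrite !evalvE.
under eq_bigr do rewrite symz_tuple -mulrA mulr_suml.
rewrite -mulr_sumr exchange_big.
transitivity ((p.+1)`!%:R^-1 * \sum_(sigma : 'S_p.+1)
    \sum_(s : p.+1.-tuple 'I_n) T s q * \prod_(k < p.+1) v 0 (tnth s k)).
  congr (_ * _); apply: eq_bigr => sigma _.
  have hinj : injective (fun s : p.+1.-tuple 'I_n => permtup s (sigma^-1)%g).
    by move=> s1 s2 E; rewrite -(permtupK s1 sigma) E permtupK.
  rewrite (reindex_inj hinj).
  apply: eq_bigr => s _.
  by rewrite permtupK prod_permtup.
rewrite sumr_const card_Sn.
set X := \sum_(s : p.+1.-tuple _) _.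
rewrite -(mulr_natl X) mulrA mulVf ?mul1r //.
Qed.

Lemma prod_join_nmax p (s : p.-tuple 'I_n) j (v : pt) :
  \prod_(k < p.+1 | k != ord_max) v 0 (tnth (tup_join (s, j)) k) =
  \prod_(k < p) v 0 (tnth s k).
Proof.
rewrite big_mkcond big_ord_recr /= eqxx mulr1.
apply: eq_bigr => k _.
have -> : (widen_ord (leqnSn p) k != ord_max) by rewrite -val_eqE /= ltn_eqF.
by rewrite tnth_join_widen.
Qed.

Lemma sym_move (T : tensor) p (l : 'I_p.+1) (A : 'I_n -> R) (v : pt) q :
  symmetric_tensor T p.+1 ->
  \sum_(s : p.+1.-tuple 'I_n) T s q * (A (tnth s l) * \prod_(k < p.+1 | k != l) v 0 (tnth s k))
  = \sum_(s : p.-tuple 'I_n) (\sum_(j < n) T (rcons s j) q * A j) * \prod_(k < p) v 0 (tnth s k).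
Proof.
move=> Hsym.
set tau := tperm l ord_max.
have hinj : injective (fun s : p.+1.-tuple 'I_n => permtup s tau).
  move=> s1 s2 E.
  by rewrite -(permtupKV s1 tau) E permtupKV.
rewrite (reindex_inj hinj).
transitivity (\sum_(s : p.+1.-tuple 'I_n) T s q *
   (A (tnth s ord_max) * \prod_(k < p.+1 | k != ord_max) v 0 (tnth s k))).
  apply: eq_bigr => s _.
  rewrite (Hsym (permtup s tau) s) ?size_tuple ?permtup_perm //.
  rewrite tnth_mktuple tpermL; congr (_ * (_ * _)).
  rewrite [RHS](reindex_inj (@perm_inj _ tau)) /=.
  apply: eq_big => k.
    by rewrite -{1}(tpermL l ord_max) (inj_eq (@perm_inj _ tau)).
  by rewrite tnth_mktuple.
rewrite sum_tuple_rcons; apply: eq_bigr => s _.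
rewrite mulr_suml; apply: eq_bigr => j _.
rewrite tnth_join_max prod_join_nmax.
by rewrite mulrA.
Qed.

Lemma evalv_ext (T1 T2 : tensor) r q (v : pt) :
  (forall s : r.-tuple 'I_n, T1 s q = T2 s q) -> evalv T1 r q v = evalv T2 r q v.
Proof. by move=> E; apply: eq_bigr => s _; rewrite E. Qed.

Lemma evalv_lin (T1 T2 : tensor) r q (v : pt) (a b : R) :
  evalv (fun s x => a * T1 s x + b * T2 s x) r q v = a * evalv T1 r q v + b * evalv T2 r q v.
Proof.
rewrite /evalv !mulr_sumr -big_split /=; apply: eq_bigr => s _; ring.
Qed.

Lemma evalv0 (T : tensor) q (v : pt) : evalv T 0 q v = T [::] q.
Proof.
rewrite /evalv (bigD1 [tuple]) //= big_nil mulr1 [X in _ + X]big1 ?addr0 //.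
by move=> s /eqP H; exfalso; exact: H (tuple0 s).
Qed.

Lemma evalv1 (T : tensor) q (v : pt) : evalv T 1 q v = \sum_(j < n) T [:: j] q * v 0 j.
Proof.
rewrite evalvE sum_tuple_rcons (bigD1 [tuple]) //= [X in _ + X]big1 ?addr0.
  by apply: eq_bigr => j _; rewrite prod_join big_ord0 mul1r.
by move=> s /eqP H; exfalso; exact: H (tuple0 s).
Qed.

Lemma evalv_nablaT (g : pt -> 'M[R]_n) (T : tensor) p X (V : pt) :
  evalv (nablaT g T) p.+1 X V =
  \sum_(s : p.-tuple 'I_n) (\sum_(j < n) partial (T s) j X * V 0 j) * \prod_(k < p) V 0 (tnth s k)
  - \sum_(l < p) \sum_(s : p.-tuple 'I_n) T s X *
     ((\sum_(b < n) \sum_(c < n) christoffel g (tnth s l) b c X * V 0 b * V 0 c) *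
      \prod_(k < p | k != l) V 0 (tnth s k)).
Proof.
rewrite evalvE sum_tuple_rcons.
under eq_bigr => s _ do under eq_bigr => j _ do
  rewrite [nablaT g T _](nablaT_rcons g T s j) covD_tuple prod_join mulrBl.
under eq_bigr do rewrite big_split.
rewrite big_split; congr (_ + _).
  apply: eq_bigr => s _; rewrite mulr_suml; apply: eq_bigr => j _; ring.
under eq_bigr do rewrite sumrN.
rewrite sumrN; congr (- _).
under eq_bigr do under eq_bigr do rewrite mulr_suml.
under eq_bigr do rewrite exchange_big.
rewrite exchange_big; apply: eq_bigr => l _.
rewrite -gamma_swap; apply: eq_bigr => s _; apply: eq_bigr => j _.
by rewrite mulr_suml.
Qed.

Lemma evalv_contrQ_sum (T : tensor) p (Q : 'I_n -> pt -> R) X (V : pt) :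
  symmetric_tensor T p.+1 ->
  (p.+1)%:R * evalv (contrQ T Q) p X V =
  \sum_(l < p.+1) \sum_(s : p.+1.-tuple 'I_n) T s X *
     (Q (tnth s l) X * \prod_(k < p.+1 | k != l) V 0 (tnth s k)).
Proof.
move=> Hsym.
under [RHS]eq_bigr => l _ do rewrite (sym_move l (fun j => Q j X) V X Hsym).
rewrite sumr_const card_ord; set Y := \sum_(s : p.-tuple _) _.
rewrite -(mulr_natl Y) evalvE; congr (_ * _).
Qed.
Lemma evalv_zero r q (v : pt) : evalv (fun _ _ => 0 : R) r q v = 0.
Proof. by rewrite /evalv big1 // => s _; rewrite mul0r. Qed.

End Forms.

Section AlongSolutions.
Variables (R : realType) (n : nat).
Local Notation pt := 'rV[R]_n.
Local Notation tensor := (tensor R n).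

Lemma is_derive_coord (y : R -> pt) t j :
  derivable y t 1 -> is_derive t (1:R) (fun t => y t 0 j) ('D_1 y t 0 j).
Proof.
move=> dy; have dyj := (derivable_mxP y t 1).1 dy 0 j.
apply: DeriveDef => //.
by rewrite derive_mx // mxE.
Qed.

(* Derivative of E_T(x(t), v(t)) for a C^1 tensor T: the chain rule in the
   base point plus the Leibniz rule in the r copies of v. *)
Lemma evalv_derive (T : tensor) r (x v : R -> pt) t (a : pt) :
  (forall s : r.-tuple 'I_n, (forall y j, derivable (T s) y (ebasis R j)) /\
      (forall j, continuous (partial (T s) j))) ->
  derivable x t 1 ->
  (forall j, is_derive t (1:R) (fun t => v t 0 j) (a 0 j)) ->
  is_derive t (1:R) (fun t => evalv T r (x t) (v t))
   (\sum_(s : r.-tuple 'I_n)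
      ((\sum_(j < n) partial (T s) j (x t) * 'D_1 x t 0 j) * \prod_(k < r) v t 0 (tnth s k)
      + T s (x t) * \sum_(l < r) a 0 (tnth s l) * \prod_(k < r | k != l) v t 0 (tnth s k))).
Proof.
move=> HT dx dv.
have -> : (fun t => evalv T r (x t) (v t)) =
  (fun t => \sum_(s : r.-tuple 'I_n) T s (x t) * \prod_(k < r) v t 0 (tnth s k)).
  by apply/funext => s; rewrite evalvE.
apply: is_derive_bigsum => s _.
have [HT1 HT2] := HT s.
have H := is_deriveM1 (chain_rule HT1 HT2 dx)
   (is_derive_prod (fun k => dv (tnth s k))).
apply: (is_derive_eq H).
rewrite addrC mulrC; congr (_ + _); congr (_ * _).
apply: eq_bigr => l _.
rewrite (bigD1 l) //= eqxx; congr (_ * _).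
by apply: eq_bigr => k kl; rewrite (negbTE kl).
Qed.

Variables (g : pt -> 'M[R]_n) (Q : 'I_n -> pt -> R) (a0 b0 : R) (x : R -> pt).
Hypothesis x_solution : is_solution g Q a0 b0 x.

(* Substituting the equation of motion for x'', the Christoffel terms cancel
   those of the covariant derivative and only the force Q remains. *)
Lemma evalv_derive_solution (T : tensor) r t :
  (1 <= r)%N -> symmetric_tensor T r ->
  (forall s : seq 'I_n, size s = r -> smooth (T s)) ->
  a0 < t < b0 ->
  is_derive t (1:R) (fun t => evalv T r (x t) (derive1 x t))
    (evalv (symz (nablaT g T)) r.+1 (x t) (derive1 x t)
     - r%:R * evalv (contrQ T Q) r.-1 (x t) (derive1 x t)).
Proof.
case: r => [//|p] _ Hsym HT Ht; have [dx dv acc] := x_solution Ht.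
have HT1 (s : p.+1.-tuple 'I_n) := smooth_C1 (HT s (size_tuple s)).
have dv' j : is_derive t (1:R) (fun t => derive1 x t 0 j) ((derive1 (derive1 x) t) 0 j).
  rewrite derive1E; exact: is_derive_coord.
apply: (is_derive_eq (evalv_derive HT1 dx dv')).
rewrite -derive1E evalv_symz evalv_nablaT evalv_contrQ_sum //.
rewrite big_split -addrA; congr (_ + _).
under eq_bigr => s _ do rewrite mulr_sumr.
rewrite exchange_big -!sumrN -big_split; apply: eq_bigr => l _.
rewrite -!sumrN -big_split; apply: eq_bigr => s _.
rewrite acc /=; ring.
Qed.

Lemma killing_evalv_derive (K : tensor) p t :
  killing_tensor g K p.+1 ->
  (forall s : seq 'I_n, size s = p.+1 -> smooth (K s)) ->
  a0 < t < b0 ->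
  is_derive t (1:R) (fun t => evalv K p.+1 (x t) (derive1 x t))
    (- ((p.+1)%:R * evalv (contrQ K Q) p (x t) (derive1 x t))).
Proof.
move=> [Ksym Kkill] HK Ht.
have := evalv_derive_solution (ltn0Sn p) Ksym HK Ht.
rewrite (@evalv_ext _ _ _ (fun _ _ => 0)) ?evalv_zero ?sub0r //.
by move=> s; apply: Kkill; rewrite size_tuple.
Qed.

End AlongSolutions.

Lemma telescope_step2 (R : comPzRingType) (c : nat -> R) p :
  \sum_(1 <= r < p.+1) (c r.+2 - c r) = c p.+1 + c p.+2 - c 1%N - c 2%N.
Proof.
elim: p => [|p IH]; first by rewrite big_geq //; ring.
by rewrite big_nat_recr //= IH; ring.
Qed.

(* The first integral, for m = p + 3. *)
Section FirstIntegral.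
Variables (R : realType) (n : nat).
Local Notation pt := 'rV[R]_n.
Local Notation tensor := (tensor R n).
Variables (g : pt -> 'M[R]_n) (Q : 'I_n -> pt -> R) (L : nat -> tensor)
  (p : nat) (lam : R).

Local Notation K := (symz (nablaT g (L p.+2))).

Definition force_potential (x : pt) : R := \sum_(c < n) L 1%N [:: c] x * Q c x.

(* I_e = e^{lam t} F / lam, where F is the following function of (q, q'). *)
Definition integrand (x v : pt) : R :=
  - evalv K p.+3 x v + lam * \sum_(1 <= r < p.+3) evalv (L r) r x v + force_potential x.

Hypothesis lam_neq0 : lam != 0.
Hypothesis top_equation : forall s : seq 'I_n, size s = p.+2 -> forall x,
  symz (nablaT g (L p.+1)) s x = - ((p.+3)%:R / lam) * contrQ K Q s x - lam * L p.+2 s x.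
Hypothesis middle_equation : forall r, (2 <= r <= p.+1)%N ->
  forall s : seq 'I_n, size s = r -> forall x,
  symz (nablaT g (L r.-1)) s x = (r.+1)%:R * contrQ (L r.+1) Q s x - lam * L r s x.
Hypothesis bottom_equation : forall (i1 : 'I_n) x,
  partial force_potential i1 x = 2 * lam * contrQ (L 2%N) Q [:: i1] x - lam ^+ 2 * L 1%N [:: i1] x.
Hypothesis christoffel_smooth : forall a b c, smooth (christoffel g a b c).
Hypothesis Q_smooth : forall a, smooth (Q a).
Hypothesis L_smooth : forall r s, (1 <= r <= p.+2)%N -> size s = r -> smooth (L r s).
Hypothesis L_symmetric : forall r, (1 <= r <= p.+2)%N -> symmetric_tensor (L r) r.
Hypothesis K_killing : killing_tensor g K p.+3.

(* Each equation on the L_r replaces the symmetrized derivative of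
   L_{r-1} by a Q-contraction of L_{r+1} and a multiple of L_r; the
   contractions telescope and the multiples of L_r rebuild -lam^2 sum E_{L_r}. *)
Lemma integrand_rate (X V : pt) :
  (p.+3)%:R * evalv (contrQ K Q) p.+2 X V
  + lam * \sum_(1 <= r < p.+3) (evalv (symz (nablaT g (L r))) r.+1 X V
                                 - r%:R * evalv (contrQ (L r) Q) r.-1 X V)
  + \sum_(k < n) partial force_potential k X * V 0 k
  = - lam * integrand X V.
Proof.
have force_rate : \sum_(k < n) partial force_potential k X * V 0 k
    = 2 * lam * evalv (contrQ (L 2%N) Q) 1 X V - lam ^+ 2 * evalv (L 1%N) 1 X V.
  rewrite !evalv1 !mulr_sumr -sumrB; apply: eq_bigr => k _.
  by rewrite bottom_equation; ring.
rewrite force_rate big_nat_recr // big_nat_recr //.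
rewrite (@evalv_ext _ _ (symz (nablaT g (L p.+1)))
    (fun s x => (- ((p.+3)%:R / lam)) * contrQ K Q s x + (- lam) * L p.+2 s x)); last first.
  by move=> s; rewrite top_equation ?size_tuple //; ring.
rewrite evalv_lin.
have middle_terms : \sum_(1 <= i < p.+1) (evalv (symz (nablaT g (L i))) i.+1 X V
            - i%:R * evalv (contrQ (L i) Q) i.-1 X V)
   = (\sum_(1 <= i < p.+1) ((i.+2)%:R * evalv (contrQ (L i.+2) Q) i.+1 X V
            - i%:R * evalv (contrQ (L i) Q) i.-1 X V))
     - lam * \sum_(1 <= i < p.+1) evalv (L i.+1) i.+1 X V.
  rewrite mulr_sumr -sumrB; apply: eq_big_nat => i /andP[i1 ip].
  rewrite (@evalv_ext _ _ _ (fun s x => (i.+2)%:R * contrQ (L i.+2) Q s x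
                                    + (- lam) * L i.+1 s x)); last first.
    move=> s; rewrite (middle_equation (r := i.+1)) ?size_tuple //; first ring.
    by rewrite ltnS i1 ltnS.
  rewrite evalv_lin; ring.
rewrite middle_terms (telescope_step2 (fun r => r%:R * evalv (contrQ (L r) Q) r.-1 X V)).
rewrite /integrand [\sum_(1 <= r < p.+3) _]big_nat_recl // [\sum_(1 <= r < p.+2) _]big_nat_recr //.
rewrite /force_potential -[\sum_(c < n) _](evalv0 (contrQ (L 1%N) Q) X V) /=.
by field.
Qed.

Lemma K_smooth s : size s = p.+3 -> smooth (K s).
Proof.
move=> Hs; apply: smooth_symz => s' Hs'.
apply: (@smooth_nablaT _ _ _ _ p.+2) => //; last by rewrite Hs' Hs.
by move=> s'' Hs''; apply: L_smooth => //; rewrite leqnn.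
Qed.

Lemma integrand_derive a0 b0 (x : R -> pt) t :
  is_solution g Q a0 b0 x -> a0 < t < b0 ->
  is_derive t (1:R) (fun t => integrand (x t) (derive1 x t))
    (- lam * integrand (x t) (derive1 x t)).
Proof.
move=> sol Ht; have [dx _ _] := sol t Ht.
have dK := killing_evalv_derive sol K_killing K_smooth Ht.
have dL r : r \in index_iota 1 p.+3 ->
   is_derive t (1:R) (fun t => evalv (L r) r (x t) (derive1 x t))
     (evalv (symz (nablaT g (L r))) r.+1 (x t) (derive1 x t)
      - r%:R * evalv (contrQ (L r) Q) r.-1 (x t) (derive1 x t)).
  rewrite mem_index_iota => /andP[r1 rp].
  have Hr : (1 <= r <= p.+2)%N by rewrite r1 -ltnS.
  apply: (evalv_derive_solution sol) => //; first exact: L_symmetric.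
  by move=> s; apply: L_smooth.
have [dP1 dP2] : (forall y j, derivable force_potential y (ebasis R j)) /\
                 (forall j, continuous (partial force_potential j)).
  apply: smooth_C1; apply: smooth_sum => c _.
  by apply: smooth_mul => //; apply: L_smooth.
have dP := chain_rule dP1 dP2 dx.
have D := is_deriveD1 (is_deriveD1 (is_deriveN1 dK)
   (is_deriveM1 (is_derive_cst lam t 1) (is_derive_bigsum dL))) dP.
rewrite -integrand_rate /integrand; apply: (is_derive_eq D).
by rewrite -derive1E opprK mulr0 addr0.
Qed.

End FirstIntegral.

Unset Implicit Arguments. Set Strict Implicit.

(* With
   m = p + 3, I_e = e^{lam t} F / lam where F' = -lam F along the solution
   ([integrand_derive]), so e^{lam t} F has zero derivative and is constant. *)
Theorem theorem1 (R : realType) (n : nat)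
  (g : 'rV[R]_n -> 'M[R]_n) (Q : 'I_n -> 'rV[R]_n -> R)
  (L : nat -> seq 'I_n -> 'rV[R]_n -> R) (m : nat) (lam : R) :
  (forall a b : 'I_n, smooth (fun x => g x a b)) ->
  (forall x, (g x)^T = g x) ->
  (forall x, g x \in unitmx) ->
  (forall a : 'I_n, smooth (Q a)) ->
  (forall r s, (1 <= r <= m.-1)%N -> size s = r -> smooth (L r s)) ->
  (forall r, (1 <= r <= m.-1)%N -> symmetric_tensor (L r) r) ->
  (3 <= m)%N -> lam != 0 ->
  killing_tensor g (symz (nablaT g (L m.-1))) m ->
  (forall s : seq 'I_n, size s = m.-1 -> forall x,
     symz (nablaT g (L m.-2)) s x =
       - (m%:R / lam) * contrQ (symz (nablaT g (L m.-1))) Q s x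
       - lam * L m.-1 s x) ->
  (forall r, (2 <= r <= m - 2)%N -> forall s : seq 'I_n, size s = r -> forall x,
     symz (nablaT g (L r.-1)) s x =
       (r.+1)%:R * contrQ (L r.+1) Q s x - lam * L r s x) ->
  (forall (i1 : 'I_n) x,
     partial (fun y => \sum_(c < n) L 1%N [:: c] y * Q c y) i1 x =
       2 * lam * contrQ (L 2%N) Q [:: i1] x - lam ^+ 2 * L 1%N [:: i1] x) ->
  forall (a0 b0 : R) (q : R -> 'rV[R]_n), is_solution g Q a0 b0 q ->
  forall t1 t2, a0 < t1 < b0 -> a0 < t2 < b0 ->
    I_e g Q L m lam t1 (q t1) (derive1 q t1) = I_e g Q L m lam t2 (q t2) (derive1 q t2).
Proof.
move=> g_smooth _ g_unit Q_smooth L_smooth L_sym m3 lam0 killing top middle bottom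
  a0 b0 q sol t1 t2 Ht1 Ht2.
have [p mE] : exists p, m = p.+3 by exists (m - 3)%N; rewrite -addn3 subnK.
subst m.
pose h t := expR (lam * t) * integrand g Q L p lam (q t) (derive1 q t).
have dh t : a0 < t < b0 -> is_derive t (1:R) h 0.
  move=> Ht; apply: is_derive_integrating_factor.
  exact: (integrand_derive lam0 top middle bottom (smooth_christoffel g_smooth g_unit)
            Q_smooth L_smooth L_sym killing sol Ht).
have Ie t : I_e g Q L p.+3 lam t (q t) (derive1 q t) = h t / lam.
  by rewrite /I_e /h mulrAC.
by rewrite !Ie (derive0_constant dh Ht1 Ht2).
Qed.
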